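(* For a set $\mathcal{R}$ of languages over $\Sigma$ and a regular language $R\subseteq\Sigma^*$ let $\mathcal{R}\,\dot\cup\,R=\{L\cup R\mid L\in\mathcal{R}\}$. (1) There exist a rational set of regular languages $\mathcal{R}$ and a regular language $R$ such that $\mathcal{R}\,\dot\cup\,R$ is not a rational set of regular languages. (2) If $\mathcal{R}$ is a finite rational set of regular languages and $R$ is regular, then $\mathcal{R}\,\dot\cup\,R$ is a rational set of regular languages. (3) In the latter case a different language substitution is in general required: there exist an alphabet $\Delta$, a regular language substitution $\varphi:\Delta\to2^{\Sigma^*}$, a regular $K\subseteq\Delta^+$ with $\mathcal{R}=(K,\varphi)$ finite, and a regular $R\subseteq\Sigma^*$ such that there is no regular $K'\subseteq\Delta^+$ with $\mathcal{R}\,\dot\cup\,R=(K',\varphi)$.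
   Context: Alphabets are nonempty finite sets. A regular language substitution $\varphi:\Delta\to2^{\Sigma^*}$ maps each symbol to a regular language over $\Sigma$, extended by $\varphi(\delta w)=\varphi(\delta)\varphi(w)$. A set $\mathcal{R}$ of regular languages over $\Sigma$ is a rational set of regular languages, written $\mathcal{R}=(K,\varphi)$, if there are an alphabet $\Delta$, a regular $K\subseteq\Delta^+$ and a regular language substitution $\varphi$ with $\mathcal{R}=\{\varphi(w)\mid w\in K\}$. *)

From mathcomp Require Import all_boot.
Set Implicit Arguments. Unset Strict Implicit. Unset Printing Implicit Defensive.

Definition lang (A : finType) := seq A -> Prop.

Record dfa (A : finType) := DFA {
  dfa_state : finType;
  dfa_s0 : dfa_state;
  dfa_fin : dfa_state -> bool;
  dfa_trans : dfa_state -> A -> dfa_state }.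

Definition dfa_accept (A : finType) (M : dfa A) (w : seq A) : bool :=
  @dfa_fin A M (foldl (@dfa_trans A M) (@dfa_s0 A M) w).

Definition regular (A : finType) (L : lang A) : Prop :=
  exists M : dfa A, forall w, L w <-> dfa_accept M w.

Definition lang_union (A : finType) (L1 L2 : lang A) : lang A :=
  fun w => L1 w \/ L2 w.

Definition lang_conc (A : finType) (L1 L2 : lang A) : lang A :=
  fun w => exists u v, w = u ++ v /\ L1 u /\ L2 v.

Definition lang_eps (A : finType) : lang A := fun w => w = [::].

Definition subst_word (D S : finType) (phi : D -> lang S) (w : seq D) : lang S :=
  foldr (fun d L => lang_conc (phi d) L) (@lang_eps S) w.

Definition regular_subst (D S : finType) (phi : D -> lang S) : Prop :=
  forall d, regular (phi d).

Definition nonempty_words (D : finType) (K : lang D) : Prop :=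
  forall w, K w -> w <> [::].

Definition image_set (D S : finType) (K : lang D) (phi : D -> lang S)
  : lang S -> Prop :=
  fun L => exists w, K w /\ L = subst_word phi w.

Definition represents (D S : finType) (K : lang D) (phi : D -> lang S)
  (RR : lang S -> Prop) : Prop :=
  forall L, RR L <-> image_set K phi L.

Definition rational_set (S : finType) (RR : lang S -> Prop) : Prop :=
  exists (D : finType) (K : lang D) (phi : D -> lang S),
    [/\ 0 < #|D|, regular K, nonempty_words K, regular_subst phi
      & represents K phi RR].

Definition dunion (S : finType) (RR : lang S -> Prop) (R : lang S)
  : lang S -> Prop :=
  fun L => exists L0, RR L0 /\ L = lang_union L0 R.

Definition finite_lang_set (S : finType) (RR : lang S -> Prop) : Prop :=
  exists (n : nat) (f : 'I_n -> lang S), forall L, RR L <-> exists i, L = f i.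

From mathcomp Require Import all_boot zify.
From Stdlib Require Import FunctionalExtensionality PropExtensionality.
From Stdlib Require Import IndefiniteDescription.
Set Implicit Arguments. Unset Strict Implicit. Unset Printing Implicit Defensive.

(* (1) Take RR = {a^n | n >= 1} over a one-letter alphabet and R = {eps}.  If
   (K, psi) represented the sets {eps, a^n}, then eps in psi(w) forces eps into
   psi(d) for every letter d of w, so psi(d) is contained in psi(w); some letter
   of w has a nonempty word, which then has length n.  Hence that letter
   determines n, and a finite alphabet cannot serve infinitely many n.
   (2) A finite set {L_1, ..., L_m} of regular languages is rational with
   K = Delta (words of length one) and phi(i) = L_i; apply this to the L_i u R.
   (3) With phi(a) = {a}, every phi(w) consists of words of one length, so
   {a} u {eps} is not of the form phi(w). *)

Definition lang_size (A : finType) (n : nat) : lang A := fun w => size w = n.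

Lemma lang_ext (A : finType) (L1 L2 : lang A) :
  (forall w, L1 w <-> L2 w) -> L1 = L2.
Proof.
by move=> E; apply: functional_extensionality => w; apply: propositional_extensionality.
Qed.

Lemma regular_ext (A : finType) (L1 L2 : lang A) :
  (forall w, L1 w <-> L2 w) -> regular L2 -> regular L1.
Proof. by move=> /lang_ext ->. Qed.

Section SizeCounter.
Variables (A : finType) (k : nat) (P : pred nat).

Definition size_dfa : dfa A :=
  @DFA A 'I_k.+1 (inord 0) (fun s => P s) (fun s _ => inord (minn s.+1 k)).

Lemma size_dfa_run (w : seq A) :
  val (foldl (@dfa_trans A size_dfa) (@dfa_s0 A size_dfa) w) = minn (size w) k.
Proof.
elim/last_ind: w => [|w a IH] /=; first by rewrite inordK ?min0n.
rewrite foldl_rcons /= size_rcons inordK IH //; lia.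
Qed.

Lemma regular_size_cap : regular (fun w : seq A => P (minn (size w) k)).
Proof. by exists size_dfa => w; rewrite /dfa_accept /= -size_dfa_run. Qed.

End SizeCounter.

Lemma regular_size (A : finType) (Q : nat -> Prop) (k : nat) (P : pred nat) :
  (forall n, Q n <-> P (minn n k)) -> regular (fun w : seq A => Q (size w)).
Proof.
by move=> QP; apply: regular_ext (regular_size_cap A k P) => w.
Qed.

Lemma regular_lang_size (A : finType) (n : nat) : regular (@lang_size A n).
Proof.
by apply: (@regular_size A (eq^~ n) n.+1 (pred1 n)) => m /=; split=> [->|/eqP]; lia.
Qed.

Lemma regular_eps (A : finType) : regular (@lang_eps A).
Proof.
apply: regular_ext (regular_lang_size A 0) => w.
by rewrite /lang_eps /lang_size; split => [->|/size0nil].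
Qed.

Lemma regular_nonnil (A : finType) : regular (fun w : seq A => 0 < size w).
Proof.
by apply: (@regular_size A (leq 1) 1 (pred1 1)) => m /=; split=> [|/eqP]; lia.
Qed.

Lemma regular_lang0 (A : finType) : regular (fun _ : seq A => False).
Proof. exact: (@regular_size A (fun=> False) 0 pred0). Qed.

Section Product.
Variables (A : finType) (M1 M2 : dfa A).

Definition union_dfa : dfa A :=
  @DFA A (dfa_state M1 * dfa_state M2)%type (dfa_s0 M1, dfa_s0 M2)
    (fun s => dfa_fin s.1 || dfa_fin s.2)
    (fun s a => (dfa_trans s.1 a, dfa_trans s.2 a)).

Lemma union_dfa_run (w : seq A) p q :
  foldl (@dfa_trans A union_dfa) (p, q) w =
  (foldl (@dfa_trans A M1) p w, foldl (@dfa_trans A M2) q w).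
Proof. by elim: w p q => [|a w IH] p q //=; rewrite IH. Qed.

Definition run1 (w : seq A) := foldl (@dfa_trans A M1) (dfa_s0 M1) w.
Definition run2 (w : seq A) := foldl (@dfa_trans A M2) (dfa_s0 M2) w.

(* Subset construction: besides the run of M1, track every state M2 can be in
   after some split of the input whose prefix M1 accepts. *)
Definition conc_state := (dfa_state M1 * {set dfa_state M2})%type.

Definition conc_start (p : dfa_state M1) : {set dfa_state M2} :=
  if dfa_fin p then [set dfa_s0 M2] else set0.

Definition conc_trans (s : conc_state) (a : A) : conc_state :=
  let p := dfa_trans s.1 a in (p, [set dfa_trans q a | q in s.2] :|: conc_start p).

Definition conc_init : conc_state := (dfa_s0 M1, conc_start (dfa_s0 M1)).

Definition conc_dfa : dfa A :=
  @DFA A conc_state conc_init (fun s => [exists q in s.2, dfa_fin q]) conc_trans.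

Lemma conc_dfa_run1 (w : seq A) : (foldl conc_trans conc_init w).1 = run1 w.
Proof.
by elim/last_ind: w => [|w a IH] //; rewrite foldl_rcons /= IH /run1 foldl_rcons.
Qed.

Lemma conc_dfa_run2 (w : seq A) q :
  q \in (foldl conc_trans conc_init w).2 <->
  exists u v, [/\ w = u ++ v, dfa_fin (run1 u) & q = run2 v].
Proof.
elim/last_ind: w q => [|w a IH] q.
  rewrite /= /conc_start; split.
    case: ifP => [F|_]; rewrite ?in_set0 // in_set1 => /eqP ->.
    by exists [::], [::].
  case=> u [v [E F ->]]; case: u v E F => [|? ?] [|? ?] //= _ F.
  by rewrite F in_set1.
rewrite foldl_rcons /= in_setU conc_dfa_run1 /conc_start -/(run1 _).
have run1_rcons : dfa_trans (run1 w) a = run1 (rcons w a) by rewrite /run1 foldl_rcons.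
rewrite run1_rcons; split.
  case/orP=> [/imsetP [q0 /IH [u [v [-> Fu ->]]] ->]|].
    by exists u, (rcons v a); rewrite rcons_cat /run2 foldl_rcons.
  case: ifP => [F|_]; rewrite ?in_set0 // in_set1 => /eqP ->.
  by exists (rcons w a), [::]; rewrite cats0.
case=> u [v]; case/lastP: v => [|v b] [Ew Fu ->].
  by rewrite cats0 in Ew; subst u; rewrite Fu in_set1 eqxx orbT.
rewrite -rcons_cat in Ew; case/rcons_inj: Ew => ? ?; subst w b.
apply/orP; left; apply/imsetP; exists (run2 v); last by rewrite /run2 foldl_rcons.
by apply/IH; exists u, v.
Qed.

End Product.

Lemma regular_union (A : finType) (L1 L2 : lang A) :
  regular L1 -> regular L2 -> regular (lang_union L1 L2).
Proof.
move=> [M1 H1] [M2 H2]; exists (union_dfa M1 M2) => w.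
rewrite /lang_union H1 H2 /dfa_accept /= union_dfa_run.
by split => [[]->|/orP[]]; rewrite ?orbT; auto.
Qed.

Lemma regular_conc (A : finType) (L1 L2 : lang A) :
  regular L1 -> regular L2 -> regular (lang_conc L1 L2).
Proof.
move=> [M1 H1] [M2 H2]; exists (conc_dfa M1 M2) => w.
rewrite /dfa_accept /=; split.
  case=> u [v [Ew [/H1 Fu /H2 Fv]]]; apply/existsP; exists (run2 M2 v).
  by rewrite [dfa_fin _]Fv andbT; apply/conc_dfa_run2; exists u, v.
case/existsP => q /andP [/conc_dfa_run2 [u [v [-> Fu ->]]] Fv].
by exists u, v; rewrite H1 H2.
Qed.

Section Substitution.
Variables (D S : finType) (psi : D -> lang S).

Lemma regular_subst_word :
  regular_subst psi -> forall w, regular (subst_word psi w).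
Proof.
move=> reg_psi; elim=> [|d w IH] /=; first exact: regular_eps.
exact: regular_conc.
Qed.

Lemma subst_word_seq1 d : subst_word psi [:: d] = psi d.
Proof.
apply: lang_ext => v; split; first by case=> u [_ [-> [Hu ->]]]; rewrite cats0.
by exists v, [::]; rewrite cats0.
Qed.

Lemma subst_word_nil w :
  subst_word psi w [::] <-> forall d, d \in w -> psi d [::].
Proof.
elim: w => [|d0 w IH] //=; split.
  case=> u [v [E [Hd0 Hw]]] d.
  case: u v E Hd0 Hw => [|? ?] [|? ?] //= _ Hd0 /IH Hw.
  by rewrite in_cons => /predU1P [->|/Hw].
move=> Hw; exists [::], [::]; split; [by [] | split].
  by apply: Hw; rewrite mem_head.
by apply/IH => d Hd; apply: Hw; rewrite in_cons Hd orbT.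
Qed.

Lemma subst_word_letter_sub w d v :
  subst_word psi w [::] -> d \in w -> psi d v -> subst_word psi w v.
Proof.
elim: w => [|d0 w IH] // /subst_word_nil eps_w.
have eps_tail : subst_word psi w [::].
  by apply/subst_word_nil => d' Hd'; apply: eps_w; rewrite in_cons Hd' orbT.
rewrite in_cons => /predU1P [-> Hv|Hd Hv] /=.
  by exists v, [::]; rewrite cats0.
by exists [::], v; split; [|split; [apply: eps_w; rewrite mem_head | exact: IH]].
Qed.

Lemma subst_word_nonnil w x :
  subst_word psi w x -> x <> [::] ->
  exists2 d, d \in w & exists2 u, psi d u & u <> [::].
Proof.
elim: w x => [|d0 w IH] x /=; first by move=> ->.
case=> -[|b u] [v [-> [Hu Hv]]] Hne.
  by have [d Hd Hdu] := IH v Hv Hne; exists d => //; rewrite in_cons Hd orbT.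
by exists d0; [rewrite mem_head | exists (b :: u)].
Qed.

End Substitution.

Lemma subst_word_lang_size1 (D S : finType) (w : seq D) :
  subst_word (fun=> @lang_size S 1) w = lang_size (size w).
Proof.
apply: lang_ext; elim: w => [|d w IH] v /=.
  by rewrite /lang_eps /lang_size; split => [->|/size0nil].
split; first by case=> x [y [-> [Hx /IH Hy]]]; rewrite /lang_size size_cat Hx Hy.
by case: v => [//|b v] [/IH Hv]; exists [:: b], v.
Qed.

Lemma rational_set_ext (S : finType) (RR1 RR2 : lang S -> Prop) :
  (forall L, RR1 L <-> RR2 L) -> rational_set RR2 -> rational_set RR1.
Proof.
move=> E [D [K [phi [? ? ? ? rep]]]]; exists D, K, phi; split=> // L.
by rewrite E.
Qed.

Lemma rational_set_regular (S : finType) (RR : lang S -> Prop) L :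
  rational_set RR -> RR L -> regular L.
Proof.
case=> D [K [phi [_ _ _ regphi rep]]] /rep [w [_ ->]].
exact: regular_subst_word.
Qed.

Lemma rational_set_finite (S : finType) (RR : lang S -> Prop) n
    (f : 'I_n -> lang S) :
  (forall L, RR L <-> exists i, L = f i) -> (forall i, regular (f i)) ->
  rational_set RR.
Proof.
case: n f => [|m] f RRf regf.
  exists unit, (fun=> False), (fun _ _ => False).
  split; rewrite ?card_unit //.
  - exact: regular_lang0.
  - by move=> _; exact: regular_lang0.
  - by move=> L; rewrite RRf; split => [[[]]|[? []]].
exists 'I_m.+1, (lang_size 1), f; split; rewrite ?card_ord //.
- exact: regular_lang_size.
- by move=> w Kw w0; rewrite w0 in Kw.
- move=> L; rewrite RRf; split=> [[i ->]|[w [Kw ->]]].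
    by exists [:: i]; rewrite subst_word_seq1.
  by case: w Kw => [|i [|? ?]] // _; exists i; rewrite subst_word_seq1.
Qed.

Lemma rational_dunion_finite (S : finType) (RR : lang S -> Prop) (R : lang S) :
  rational_set RR -> finite_lang_set RR -> regular R -> rational_set (dunion RR R).
Proof.
move=> ratRR [n [f RRf]] regR.
apply: (@rational_set_finite _ _ n (fun i => lang_union (f i) R)).
  move=> L; split=> [[L0 [/RRf [i ->] ->]]|[i ->]]; first by exists i.
  by exists (f i); split => //; apply/RRf; exists i.
move=> i; apply: regular_union regR; apply: rational_set_regular ratRR _.
by apply/RRf; exists i.
Qed.

Lemma finite_pigeonhole_nat (D : finType) (Q : nat -> D -> Prop) :
  (forall n, exists d, Q n d) -> ~ (forall n m d, Q n d -> Q m d -> n = m).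
Proof.
move=> exQ injQ.
pose g (i : 'I_#|D|.+1) := proj1_sig (constructive_indefinite_description _ (exQ i)).
have g_inj : injective g.
  move=> i j gij; apply: val_inj; apply: (injQ _ _ (g i)); first exact: proj2_sig.
  by rewrite gij; exact: proj2_sig.
by have := leq_card g g_inj; rewrite card_ord ltnn.
Qed.

Definition eps_or_size (S : finType) (n : nat) : lang S :=
  lang_union (lang_size n) (lang_size 0).

Lemma not_rational_eps_or_size (S : finType) (s : S) :
  ~ rational_set (fun L => exists2 n, 0 < n & L = @eps_or_size S n).
Proof.
case=> D [K [psi [_ _ _ _ rep]]].
pose Q n d :=
  (forall v, psi d v -> eps_or_size n.+1 v) /\ exists2 u, psi d u & u <> [::].
apply: (@finite_pigeonhole_nat D Q).
  move=> n; have [|w [_ Ew]] := (rep (eps_or_size n.+1)).1; first by exists n.+1.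
  have eps_w : subst_word psi w [::] by rewrite -Ew; right.
  have : subst_word psi w (nseq n.+1 s).
    by rewrite -Ew; left; rewrite /lang_size size_nseq.
  case/subst_word_nonnil => // d dw nonnil_d; exists d; split => // v psi_dv.
  by rewrite Ew; exact: subst_word_letter_sub eps_w dw psi_dv.
move=> n m d [Hn [u ud u0]] [Hm _].
have size_u k : eps_or_size k u -> size u = k by case=> // /size0nil.
by have := size_u _ (Hn u ud); rewrite (size_u _ (Hm u ud)) => -[].
Qed.

Definition positive_sizes : lang unit -> Prop :=
  image_set (fun w : seq unit => 0 < size w) (fun=> lang_size 1).

Lemma rational_positive_sizes : rational_set positive_sizes.
Proof.
exists unit, (fun w => 0 < size w), (fun=> lang_size 1); split; rewrite ?card_unit //.
- exact: regular_nonnil.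
- by move=> w + w0; rewrite w0.
- by move=> _; exact: regular_lang_size.
Qed.

Lemma dunion_positive_sizes L :
  dunion positive_sizes (lang_size 0) L <-> exists2 n, 0 < n & L = eps_or_size n.
Proof.
split=> [[_ [[w [w0 ->]] ->]]|[n n0 ->]].
  by exists (size w); rewrite // subst_word_lang_size1.
exists (lang_size n); split => //; exists (nseq n tt).
by rewrite size_nseq subst_word_lang_size1 size_nseq.
Qed.

Lemma subst_word_size1_neq_eps_or_size (D S : finType) (s : S) (w : seq D) :
  subst_word (fun=> @lang_size S 1) w <> eps_or_size 1.
Proof.
rewrite subst_word_lang_size1 => E.
have : @lang_size S (size w) [::] by rewrite E; right.
have : lang_size (size w) [:: s] by rewrite E; left.
by rewrite /lang_size => <-.
Qed.

Definition size1_letters : lang unit -> Prop :=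
  image_set (@lang_size unit 1) (fun=> lang_size 1).

Lemma finite_size1_letters : finite_lang_set size1_letters.
Proof.
exists 1, (fun=> lang_size 1) => L; split=> [[w [w1 ->]]|[_ ->]].
  by exists ord0; rewrite subst_word_lang_size1 w1.
by exists [:: tt]; rewrite subst_word_lang_size1.
Qed.

Lemma not_represents_dunion_size1_letters (K' : lang unit) :
  ~ represents K' (fun=> lang_size 1) (dunion size1_letters (lang_size 0)).
Proof.
move=> rep; have [|w [_ Ew]] := (rep (eps_or_size 1)).1.
  by exists (lang_size 1); split => //; exists [:: tt]; rewrite subst_word_seq1.
exact: subst_word_size1_neq_eps_or_size tt w (esym Ew).
Qed.

Theorem proposition6 :
  (* (1) *)
  (exists (S : finType) (RR : lang S -> Prop) (R : lang S),
      [/\ 0 < #|S|, rational_set RR, regular R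
        & ~ rational_set (dunion RR R)])
  /\
  (* (2) *)
  (forall (S : finType) (RR : lang S -> Prop) (R : lang S),
      0 < #|S| -> rational_set RR -> finite_lang_set RR -> regular R ->
      rational_set (dunion RR R))
  /\
  (* (3) *)
  (exists (S D : finType) (phi : D -> lang S) (K : lang D) (R : lang S),
      0 < #|S| /\ 0 < #|D| /\ regular_subst phi /\ regular K /\
      nonempty_words K /\ finite_lang_set (image_set K phi) /\ regular R /\
      ~ exists K' : lang D,
              [/\ regular K', nonempty_words K'
                & represents K' phi (dunion (image_set K phi) R)]).
Proof.
split.
  exists unit, positive_sizes, (lang_size 0); split.
  - by rewrite card_unit.
  - exact: rational_positive_sizes.
  - exact: regular_lang_size.
  - move/(rational_set_ext (fun L => iff_sym (dunion_positive_sizes L))).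
    exact: not_rational_eps_or_size tt.
split; first by move=> S RR R _; exact: rational_dunion_finite.
exists unit, unit, (fun=> lang_size 1), (lang_size 1), (lang_size 0).
split; first by rewrite card_unit.
split; first by rewrite card_unit.
split; first by move=> _; exact: regular_lang_size.
split; first exact: regular_lang_size.
split; first by move=> w w1 w0; rewrite w0 in w1.
split; first exact: finite_size1_letters.
split; first exact: regular_lang_size.
by case=> K' [_ _]; exact: not_represents_dunion_size1_letters.
Qed.
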